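(* Let $V$ be a vector space and $U_1,U_2,U_3\subset V$ subspaces. Put $U=U_1\times U_2\times U_3\subset X=V\times V\times V$ and $Y=\{(v,v,v):v\in V\}\subset X$. Then $X=U+Y$ if and only if $V=U_1+(U_2\cap U_3)=U_2+(U_3\cap U_1)=U_3+(U_1\cap U_2)$. *)

From HB Require Import structures.
From mathcomp Require Import all_boot all_algebra.
Set Implicit Arguments. Unset Strict Implicit. Unset Printing Implicit Defensive.
Import GRing.Theory.
Local Open Scope ring_scope.

Definition subspace (K : fieldType) (V : lmodType K) (U : V -> Prop) : Prop :=
  U 0 /\ (forall (a : K) (x y : V), U x -> U y -> U (a *: x + y)).

Definition sumsp (M : zmodType) (U W : M -> Prop) : M -> Prop :=
  fun x => exists u w, U u /\ W w /\ x = u + w.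

Definition capsp (M : Type) (U W : M -> Prop) : M -> Prop :=
  fun x => U x /\ W x.

Definition is_whole (M : Type) (U : M -> Prop) : Prop := forall x, U x.

Definition prodsp3 (M : Type) (U1 U2 U3 : M -> Prop) : M * M * M -> Prop :=
  fun x => U1 x.1.1 /\ U2 x.1.2 /\ U3 x.2.

Definition diag3 (M : Type) : M * M * M -> Prop :=
  fun x => exists v, x = (v, v, v).

From HB Require Import structures.
From mathcomp Require Import all_boot all_algebra.
Local Open Scope ring_scope.
Import GRing.Theory.
Set Implicit Arguments. Unset Strict Implicit. Unset Printing Implicit Defensive.

(* X = U + Y holds iff each coordinate axis of X lies in U + Y, since U + Y is
   closed under addition.  For the first axis, (v, 0, 0) = (u1, u2, u3) + (z, z, z)
   forces z = -u2 = -u3, i.e. v = u1 + z with z in U2 ∩ U3; the other axes are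
   reduced to the first one by cyclically permuting the coordinates. *)

Definition add_closed (M : zmodType) (U : M -> Prop) : Prop :=
  forall x y, U x -> U y -> U (x + y).

Section Subspace.
Variables (K : fieldType) (V : lmodType K) (U : V -> Prop).
Hypothesis hU : subspace U.

Lemma subspace_add_closed : add_closed U.
Proof. by move=> x y hx hy; have := hU.2 1 x y hx hy; rewrite scale1r. Qed.

Lemma subspaceN x : U x -> U (- x).
Proof. by move=> hx; have := hU.2 (-1) x 0 hx hU.1; rewrite addr0 scaleN1r. Qed.

End Subspace.

Section SumOfSubsets.
Variable M : zmodType.

Lemma sumsp_add_closed (U W : M -> Prop) :
  add_closed U -> add_closed W -> add_closed (sumsp U W).
Proof.
move=> hU hW _ _ [u [w [Uu [Ww ->]]]] [u' [w' [Uu' [Ww' ->]]]].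
by exists (u + u'), (w + w'); rewrite addrACA; split; [apply: hU|split; [apply: hW|]].
Qed.

Lemma prodsp3_add_closed (U1 U2 U3 : M -> Prop) :
  add_closed U1 -> add_closed U2 -> add_closed U3 -> add_closed (prodsp3 U1 U2 U3).
Proof.
move=> h1 h2 h3 [[x1 x2] x3] [[y1 y2] y3] [/= Ux1 [Ux2 Ux3]] [/= Uy1 [Uy2 Uy3]].
by split; [apply: h1|split; [apply: h2|apply: h3]].
Qed.

Lemma diag3_add_closed : add_closed (@diag3 M).
Proof. by move=> _ _ [v ->] [w ->]; exists (v + w). Qed.

Lemma sum_diag3_rotate (U1 U2 U3 : M -> Prop) a b c :
  sumsp (prodsp3 U1 U2 U3) (@diag3 M) (a, b, c) ->
  sumsp (prodsp3 U2 U3 U1) (@diag3 M) (b, c, a).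
Proof.
move=> [[[u1 u2] u3] [_ [[/= U1u [U2u U3u]] [[z ->] [-> -> ->]]]]].
by exists (u2, u3, u1), (z, z, z); split; [|split; [exists z|]].
Qed.

End SumOfSubsets.

Section FirstAxis.
Variables (K : fieldType) (V : lmodType K) (U1 U2 U3 : V -> Prop).
Hypotheses (hU2 : subspace U2) (hU3 : subspace U3).

Lemma sum_diag3_axis v :
  sumsp (prodsp3 U1 U2 U3) (@diag3 V) (v, 0, 0) <-> sumsp U1 (capsp U2 U3) v.
Proof.
split.
- move=> [[[u1 u2] u3] [_ [[/= U1u [U2u U3u]] [[z ->] [-> e2 e3]]]]].
  have opp_u (u : V) : 0 = u + z -> z = - u by move=> e; apply: (addrI u); rewrite -e subrr.
  exists u1, z; split=> //; split=> //.
  by split; [rewrite (opp_u u2 e2); apply: subspaceN|rewrite (opp_u u3 e3); apply: subspaceN].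
- move=> [a [b [U1a [[U2b U3b] ->]]]].
  exists (a, - b, - b), (b, b, b); split; first by split=> //; split; apply: subspaceN.
  split; first by exists b.
  by change ((a + b, 0, 0) = (a + b, - b + b, - b + b)); rewrite addNr.
Qed.

End FirstAxis.

Theorem lemma6p2 (K : fieldType) (V : lmodType K) (U1 U2 U3 : V -> Prop)
  (hU1 : subspace U1) (hU2 : subspace U2) (hU3 : subspace U3) :
  is_whole (sumsp (prodsp3 U1 U2 U3) (@diag3 V)) <->
  (is_whole (sumsp U1 (capsp U2 U3)) /\
   is_whole (sumsp U2 (capsp U3 U1)) /\
   is_whole (sumsp U3 (capsp U1 U2))).
Proof.
split.
- move=> H; split; [|split] => v; apply/sum_diag3_axis => //.
  + exact: sum_diag3_rotate (H (0, v, 0)).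
  + exact: sum_diag3_rotate (sum_diag3_rotate (H (0, 0, v))).
- case=> H1 [H2 H3] [[x1 x2] x3].
  have -> : (x1, x2, x3) = (x1, 0, 0) + (0, x2, 0) + (0, 0, x3).
    by change ((x1, x2, x3) = (x1 + 0 + 0, 0 + x2 + 0, 0 + 0 + x3));
      rewrite !addr0 !add0r.
  have sum_closed := sumsp_add_closed
    (prodsp3_add_closed (subspace_add_closed hU1) (subspace_add_closed hU2)
       (subspace_add_closed hU3)) (@diag3_add_closed V).
  apply: (sum_closed); first apply: sum_closed.
  + exact/sum_diag3_axis.
  + exact/sum_diag3_rotate/sum_diag3_rotate/sum_diag3_axis.
  + exact/sum_diag3_rotate/sum_diag3_axis.
Qed.
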